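(* Let $E$ be a Hermite–Biehler entire function with no real zeros whose phase function satisfies $\varphi'\in L^\infty(\mathbb{R})$. There exists $\delta>0$, depending only on $\lVert\varphi'\rVert_\infty$, such that for every $\xi\in\mathbb{R}$ and every $\alpha\in[0,\pi)$ with $\lvert A_\alpha(\xi)\rvert=\lvert E(\xi)\rvert$ there is an interval $I=(a,b)$ containing $\xi$ with $\xi-a>\delta$, $b-\xi>\delta$, and $$\left\lvert\frac{A_\alpha(x)}{E(x)}\right\rvert^2\ge\frac12,\qquad x\in I.$$
   Context: An entire function $E$ is Hermite–Biehler if $\lvert E(\overline{z})\rvert < \lvert E(z)\rvert$ for $z$ in the upper half-plane $\mathbb{C}_+$. Let $E^{\#}(z)=\overline{E(\overline z)}$; the phase function $\varphi$ is a smooth real function on $\mathbb{R}$ with $E^{\#}(x)/E(x)=e^{i\varphi(x)}$ (equivalently $\varphi=-2\arg E$ on $\mathbb{R}$). For $\alpha\in\mathbb{R}$, $A_\alpha=(e^{i\alpha}E+e^{-i\alpha}E^{\#})/2$ is the real part of $e^{i\alpha}E$. *)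

From Stdlib Require Import Reals.
From Coquelicot Require Import Coquelicot.
Open Scope R_scope.

Notation CC := Coquelicot.Complex.C.

Definition expi (t : R) : CC := (cos t, sin t).

Definition entire (E : CC -> CC) : Prop :=
  forall z : CC, @ex_derive C_AbsRing C_NormedModule E z.

Definition Esharp (E : CC -> CC) (z : CC) : CC := Cconj (E (Cconj z)).

Definition hermite_biehler (E : CC -> CC) : Prop :=
  entire E /\ forall z : CC, 0 < Im z -> Cmod (E (Cconj z)) < Cmod (E z).

Definition phase_function (E : CC -> CC) (phi : R -> R) : Prop :=
  (forall (n : nat) (x : R), ex_derive_n phi n x) /\
  forall x : R, Cdiv (Esharp E (RtoC x)) (E (RtoC x)) = expi (phi x).

Definition A_alpha (E : CC -> CC) (alpha : R) (z : CC) : CC :=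
  Cdiv (Cplus (Cmult (expi alpha) (E z))
              (Cmult (expi (- alpha)) (Esharp E z))) (RtoC 2).

(* ||phi'||_oo = M (phi' continuous, so the essential sup is the sup). *)
Definition sup_norm_deriv_eq (phi : R -> R) (M : R) : Prop :=
  (forall x : R, Rabs (Derive phi x) <= M) /\
  (forall eps : R, 0 < eps -> exists x : R, M - eps < Rabs (Derive phi x)).

From Stdlib Require Import Reals Lra.
From Coquelicot Require Import Coquelicot.
Open Scope R_scope.

(* On the real line E^# / E = e^{i phi}, so |A_alpha / E|^2 = (1 + cos (phi - 2 alpha)) / 2.
   The hypothesis |A_alpha(xi)| = |E(xi)| says that phi(xi) - 2 alpha is a multiple of 2 pi,
   and since phi is (sup |phi'|)-Lipschitz, phi - 2 alpha stays within pi/2 of that multiple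
   on an interval of radius ~ 1 / sup |phi'| around xi, where therefore the cosine is
   positive. *)

Lemma Cconj_RtoC (x : R) : Cconj (RtoC x) = RtoC x.
Proof. unfold Cconj, RtoC; simpl; now rewrite Ropp_0. Qed.

Lemma Cmod_A_alpha_div_sqr (E : CC -> CC) (alpha x t : R) :
  E (RtoC x) <> RtoC 0 ->
  Cdiv (Esharp E (RtoC x)) (E (RtoC x)) = expi t ->
  Cmod (Cdiv (A_alpha E alpha (RtoC x)) (E (RtoC x))) ^ 2
    = (1 + cos (t - 2 * alpha)) / 2.
Proof.
  intros Hnz Hphase.
  unfold Cmod at 1.
  rewrite pow2_sqrt by (apply Rplus_le_le_0_compat; apply pow2_ge_0).
  replace (1 + cos (t - 2 * alpha))
    with (sin alpha ^ 2 + cos alpha ^ 2 + cos (t - 2 * alpha))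
    by (pose proof (sin2_cos2 alpha) as H; unfold Rsqr in H; nra).
  rewrite cos_minus, cos_2a, sin_2a.
  unfold A_alpha, Esharp in *.
  rewrite Cconj_RtoC in *.
  destruct (E (RtoC x)) as [u v].
  assert (Huv : u * u + v * v <> 0).
  { intro H0. apply Hnz. assert (u = 0) by nra. assert (v = 0) by nra. subst; reflexivity. }
  unfold Cdiv, expi, Cconj, Cmult, Cinv, Cplus, RtoC in *; simpl in *.
  injection Hphase as Hcos Hsin.
  rewrite <- Hcos, <- Hsin, cos_neg, sin_neg.
  field. exact Huv.
Qed.

Lemma cos_eq_1_of_Cmod_A_alpha_eq (E : CC -> CC) (alpha x t : R) :
  E (RtoC x) <> RtoC 0 ->
  Cdiv (Esharp E (RtoC x)) (E (RtoC x)) = expi t ->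
  Cmod (A_alpha E alpha (RtoC x)) = Cmod (E (RtoC x)) ->
  cos (t - 2 * alpha) = 1.
Proof.
  intros Hnz Hphase Heq.
  pose proof (Cmod_A_alpha_div_sqr E alpha x t Hnz Hphase) as Hsqr.
  assert (HEpos : Cmod (E (RtoC x)) <> 0) by (intro H0; apply Hnz, Cmod_eq_0, H0).
  rewrite Cmod_div, Heq, Rdiv_diag in Hsqr by assumption.
  lra.
Qed.

Lemma cos_pos_near_cos_eq_1 (t0 t : R) :
  cos t0 = 1 -> Rabs (t - t0) < PI / 2 -> 0 < cos t.
Proof.
  intros Hcos Hdist.
  assert (Hsin : sin t0 = 0).
  { pose proof (sin2_cos2 t0) as H. rewrite Hcos in H. unfold Rsqr in H. nra. }
  replace t with ((t - t0) + t0) by ring.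
  rewrite cos_plus, Hcos, Hsin, Rmult_1_r, Rmult_0_r, Rminus_0_r.
  apply Rabs_def2 in Hdist.
  apply cos_gt_0; lra.
Qed.

Theorem lemma7 :
  forall M : R, exists delta : R, 0 < delta /\
    forall (E : CC -> CC) (phi : R -> R),
      hermite_biehler E ->
      (forall x : R, E (RtoC x) <> RtoC 0) ->
      phase_function E phi ->
      sup_norm_deriv_eq phi M ->
      forall (xi alpha : R), 0 <= alpha < PI ->
        Cmod (A_alpha E alpha (RtoC xi)) = Cmod (E (RtoC xi)) ->
        exists a b : R, a < xi < b /\ xi - a > delta /\ b - xi > delta /\
          forall x : R, a < x < b ->
            Cmod (Cdiv (A_alpha E alpha (RtoC x)) (E (RtoC x))) ^ 2 >= 1 / 2.
Proof.
  intros M.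
  assert (HM1 : 0 < Rabs M + 1) by (pose proof (Rabs_pos M); lra).
  set (r := / (Rabs M + 1)).
  assert (Hr : 0 < r) by (apply Rinv_0_lt_compat; exact HM1).
  assert (HMr : Rabs M * r < 1).
  { unfold r. apply (Rmult_lt_reg_r (Rabs M + 1)); [lra|].
    rewrite Rmult_assoc, Rinv_l by lra. lra. }
  exists (r / 2). split; [lra|].
  intros E phi _ Hnz [Hsmooth Hphase] [Hbound _] xi alpha _ Heq.
  exists (xi - r), (xi + r).
  split; [lra|]. split; [lra|]. split; [lra|].
  intros x Hx.
  assert (Hlip : Rabs (phi x - phi xi) <= Rabs M * Rabs (x - xi)).
  { apply bounded_variation with (dh := Derive phi). intros y _. split.
    - apply Derive_correct, (Hsmooth 1%nat).
    - eapply Rle_trans; [apply Hbound | apply RRle_abs]. }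
  assert (Hclose : Rabs ((phi x - 2 * alpha) - (phi xi - 2 * alpha)) < PI / 2).
  { replace (phi x - 2 * alpha - (phi xi - 2 * alpha)) with (phi x - phi xi) by ring.
    assert (Rabs M * Rabs (x - xi) <= Rabs M * r)
      by (apply Rmult_le_compat_l; [apply Rabs_pos | apply Rabs_le; lra]).
    pose proof PI2_1. lra. }
  pose proof (cos_pos_near_cos_eq_1 _ _
    (cos_eq_1_of_Cmod_A_alpha_eq E alpha xi (phi xi) (Hnz xi) (Hphase xi) Heq) Hclose).
  rewrite (Cmod_A_alpha_div_sqr E alpha x (phi x) (Hnz x) (Hphase x)).
  lra.
Qed.
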